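(* Let $k,l\ge1$ with $k\ne l$, $1\le r\le(2k+1)(2l+1)$, $\mathcal{B}=\mathcal{B}(2k+1,2l+1;r)$ and $G=\langle H,V\rangle$. Then \[|\mathcal{O}_G(\mathcal{B})|=\frac14\left(\binom{(2k+1)(2l+1)}{r}+\binom{2kl+k+l}{\lfloor\frac r2\rfloor}+\sum_{t=0}^{r}\binom{2k+1}{t}\binom{2kl+l}{\frac{r-t}{2}}+\sum_{t=0}^{r}\binom{2l+1}{t}\binom{2kl+k}{\frac{r-t}{2}}\right).\]
   Context: $\mathcal{B}(2k+1,2l+1;r)$ is the set of all subsets of exactly $r$ cells (boards with $r$ blocked cells) of a grid with $2k+1$ rows and $2l+1$ columns. $\langle H,V\rangle=\{R_0,H,V,R_{180}\}$ is the group generated by the reflections $H$, $V$ across the horizontal and vertical midlines (with $R_{180}$ the 180-degree rotation), acting on boards; $\mathcal{O}_G(\mathcal{B})$ is the set of orbits. Convention: $\binom{a}{b}=0$ when $b$ is not a nonnegative integer or $b>a$. *)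

From mathcomp Require Import all_boot.
Set Implicit Arguments. Unset Strict Implicit. Unset Printing Implicit Defensive.

(* Cells of a grid with 2k+1 rows and 2l+1 columns: (row, column). *)
Definition cell (k l : nat) : finType := ('I_(2*k+1) * 'I_(2*l+1))%type.

Definition reflH k l (c : cell k l) : cell k l := (rev_ord c.1, c.2).
Definition reflV k l (c : cell k l) : cell k l := (c.1, rev_ord c.2).

(* The group <H,V> = {R0, H, V, R180}, indexed by (apply H?, apply V?):
   (false,false) = R0, (true,false) = H, (false,true) = V,
   (true,true) = R180 = H o V. *)
Definition hv_elt k l (g : bool * bool) : cell k l -> cell k l :=
  fun c => (if g.2 then @reflV k l else id) ((if g.1 then @reflH k l else id) c).

Definition boards k l r : {set {set cell k l}} := [set B : {set cell k l} | #|B| == r].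

Definition hv_orbit k l (B : {set cell k l}) : {set {set cell k l}} :=
  [set (@hv_elt k l g) @: B | g : bool * bool].

Definition hv_orbits k l r : {set {set {set cell k l}}} :=
  [set @hv_orbit k l B | B in boards k l r].

(* Binomial with the convention C(a, x/2) = 0 when x/2 is not an integer. *)
Definition binom_half (a x : nat) : nat := if odd x then 0 else 'C(a, x./2).

From mathcomp Require Import all_boot all_fingroup zify.
Set Implicit Arguments. Unset Strict Implicit. Unset Printing Implicit Defensive.

(* Burnside's lemma: four times the number of orbits is the sum of the numbers
   of r-boards fixed by R0, H, V and R180.  A board fixed by an involution s is
   a set of s-fixed cells together with a union of 2-cycles of s; choosing one
   cell of each 2-cycle, it amounts to t fixed cells and (r - t)/2 chosen cells.
   H fixes the 2l+1 cells of the middle row and pairs the k(2l+1) cells above it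
   with those below, V is symmetric, and R180 fixes only the centre while pairing
   the 2kl + k + l cells preceding it (in row-major order) with those after it. *)

Lemma sum_subsets_card (T : finType) (F : {set T}) (G : nat -> nat) n :
  (forall t, n <= t -> G t = 0) ->
  \sum_(S : {set T} | S \subset F) G #|S| = \sum_(t < n) 'C(#|F|, t) * G t.
Proof.
move=> G_vanish.
have G_split (S : {set T}) : G #|S| = \sum_(t < n | #|S| == t) G t.
  case: (ltnP #|S| n) => [lt_Sn|le_nS].
    by rewrite (big_pred1 (Ordinal lt_Sn)) // => t; rewrite /= eq_sym -val_eqE.
  rewrite G_vanish // big_pred0 // => t.
  by apply/negbTE; rewrite neq_ltn (leq_trans (ltn_ord t) le_nS) orbT.
under eq_bigr => S _ do rewrite G_split.
rewrite (exchange_big_dep predT) //=; apply: eq_bigr => t _.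
rewrite sum_nat_const -cards_draws; congr (_ * _).
by apply: eq_card => S; rewrite !inE.
Qed.

Lemma card_subsets_double (T : finType) (R : {set T}) n :
  #|[set Q : {set T} | Q \subset R & 2 * #|Q| == n]| = binom_half #|R| n.
Proof.
rewrite /binom_half; case: ifP => odd_n.
  apply: eq_card0 => Q; rewrite !inE; apply/negbTE/nandP; right.
  by apply/negP => /eqP n_eq; move: odd_n; rewrite -n_eq oddM.
rewrite -cards_draws; apply: eq_card => Q; rewrite !inE; congr (_ && _).
have := odd_double_half n; rewrite odd_n add0n => n_eq.
by apply/eqP/eqP; lia.
Qed.

Definition fixed_subsets (T : finType) (s : T -> T) r :=
  [set B : {set T} | (#|B| == r) && (s @: B == B)].

Lemma card_fixed_subsets_id (T : finType) r :
  #|fixed_subsets (@id T) r| = 'C(#|T|, r).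
Proof.
by rewrite -card_draws; apply: eq_card => B; rewrite !inE imset_id eqxx andbT.
Qed.

Section InvolutionFixedSubsets.

Variables (T : finType) (s : T -> T).
Hypothesis sK : involutive s.
Variable R : {set T}.
Hypothesis R_moved : forall x, x \in R -> s x \notin R.
Hypothesis R_covers : forall x, s x != x -> (x \in R) || (s x \in R).

Let F := [set x | s x == x].

Lemma R_not_fixed x : x \in R -> s x != x.
Proof. by move=> xR; apply/eqP => sx_x; move: (R_moved xR); rewrite sx_x xR. Qed.

Lemma image_R_not_fixed (Q : {set T}) x : Q \subset R -> x \in s @: Q -> s x != x.
Proof.
move=> QR /imsetP[y yQ ->]; rewrite sK eq_sym.
exact/R_not_fixed/(subsetP QR).
Qed.

Definition inv_union (S Q : {set T}) := S :|: (Q :|: s @: Q).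

Lemma inv_unionIF (S Q : {set T}) : S \subset F -> Q \subset R -> inv_union S Q :&: F = S.
Proof.
move=> SF QR; apply/setP => x; rewrite !inE.
apply/idP/idP => [/andP[/orP[//|/orP[xQ|xsQ]] /eqP sx_x]|xS].
- by move: (R_not_fixed (subsetP QR x xQ)); rewrite sx_x eqxx.
- by move: (image_R_not_fixed QR xsQ); rewrite sx_x eqxx.
- by rewrite xS; move: (subsetP SF x xS); rewrite inE.
Qed.

Lemma inv_unionIR (S Q : {set T}) : S \subset F -> Q \subset R -> inv_union S Q :&: R = Q.
Proof.
move=> SF QR; apply/setP => x; rewrite !inE.
case xQ: (x \in Q); first by rewrite orbT (subsetP QR x xQ).
apply/negbTE/andP => -[/orP[xS|/imsetP[y yQ ->]] xR].
  by move: (R_not_fixed xR); move: (subsetP SF x xS); rewrite inE => ->.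
by move: (R_moved (subsetP QR y yQ)); rewrite xR.
Qed.

Lemma card_inv_union (S Q : {set T}) :
  S \subset F -> Q \subset R -> #|inv_union S Q| = #|S| + 2 * #|Q|.
Proof.
move=> SF QR; rewrite /inv_union.
have disjoint_Q : Q :&: s @: Q = set0.
  apply/setP => x; rewrite !inE; apply/negbTE/andP => -[xQ /imsetP[y yQ x_eq]].
  by move: (R_moved (subsetP QR y yQ)); rewrite -x_eq (subsetP QR _ xQ).
have disjoint_S : S :&: (Q :|: s @: Q) = set0.
  apply/setP => x; rewrite !inE; apply/negbTE/andP => -[xS xQsQ].
  have /negP[] : s x != x.
    by case/orP: xQsQ => [/(subsetP QR)/R_not_fixed|/(image_R_not_fixed QR)].
  by move: (subsetP SF x xS); rewrite inE.
rewrite cardsU disjoint_S cards0 subn0 cardsU disjoint_Q cards0 subn0.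
by rewrite (card_imset _ (inv_inj sK)) addnn mul2n.
Qed.

Lemma inv_union_stable (S Q : {set T}) : S \subset F -> s @: inv_union S Q = inv_union S Q.
Proof.
move=> SF; rewrite /inv_union !imsetU -imset_comp.
have -> : s @: S = S.
  rewrite -[RHS]imset_id; apply: eq_in_imset => x xS.
  by move: (subsetP SF x xS); rewrite inE => /eqP.
rewrite (eq_imset _ sK) imset_id.
by rewrite [Q :|: _]setUC.
Qed.

Lemma stable_inv_union (B : {set T}) : s @: B = B -> inv_union (B :&: F) (B :&: R) = B.
Proof.
move=> sB; apply/setP => x; rewrite !inE; apply/idP/idP.
- case/orP => [/andP[]//|/orP[/andP[]//|/imsetP[y]]].
  by rewrite !inE => /andP[yB _] ->; rewrite -sB; apply: imset_f.
- move=> xB; rewrite xB /=; case: (eqVneq (s x) x) => //= sx_x.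
  case/orP: (R_covers sx_x) => [-> //|sxR].
  apply/orP; right; apply/imsetP; exists (s x); last by rewrite sK.
  by rewrite !inE sxR -sB imset_f.
Qed.

Lemma card_fixed_subsets r :
  #|fixed_subsets s r| = \sum_(t < r.+1) 'C(#|F|, t) * binom_half #|R| (r - t).
Proof.
pose D := [set p : {set T} * {set T} |
           [&& p.1 \subset F, p.2 \subset R & #|p.1| + 2 * #|p.2| == r]].
have fixedE : fixed_subsets s r = [set inv_union p.1 p.2 | p in D].
  apply/setP => B; rewrite inE; apply/andP/imsetP.
  - move=> [/eqP cardB /eqP sB]; exists (B :&: F, B :&: R); last first.
      by rewrite stable_inv_union.
    rewrite inE /= !subsetIr -(card_inv_union (subsetIr B F) (subsetIr B R)).
    by rewrite stable_inv_union // cardB eqxx.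
  - move=> [[S Q]]; rewrite inE /= => /and3P[SF QR /eqP card_SQ] ->.
    by rewrite card_inv_union // card_SQ eqxx inv_union_stable.
have inv_union_inj : {in D &, injective (fun p => inv_union p.1 p.2)}.
  move=> [S1 Q1] [S2 Q2]; rewrite !inE /= => /and3P[SF1 QR1 _] /and3P[SF2 QR2 _] eq12.
  have := inv_unionIF SF1 QR1; have := inv_unionIR SF1 QR1.
  by rewrite eq12 inv_unionIF // inv_unionIR // => -> ->.
rewrite fixedE card_in_imset // -sum1_card.
under eq_bigl => p do rewrite inE.
rewrite -(pair_big_dep (fun S : {set T} => S \subset F)
  (fun S Q : {set T} => (Q \subset R) && (#|S| + 2 * #|Q| == r)) (fun _ _ => 1)) /=.
pose G m := #|[set Q : {set T} | Q \subset R & m + 2 * #|Q| == r]|.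
transitivity (\sum_(S : {set T} | S \subset F) G #|S|).
  by apply: eq_bigr => S _; rewrite sum1_card; apply: eq_card => Q; rewrite inE.
rewrite (@sum_subsets_card _ F G r.+1) => [|t lt_rt].
  apply: eq_bigr => t _; congr (_ * _); rewrite -card_subsets_double.
  by apply: eq_card => Q; rewrite !inE; have := ltn_ord t; case: (Q \subset R) => //=; lia.
apply: eq_card0 => Q; rewrite !inE.
by apply/negbTE/nandP; right; apply/negP => /eqP; lia.
Qed.

End InvolutionFixedSubsets.

Lemma sum_binom1_half M r :
  \sum_(t < r.+1) 'C(1, t) * binom_half M (r - t) = 'C(M, r./2).
Proof.
case: r => [|r]; first by rewrite big_ord1 /binom_half /= !bin0.
rewrite 2!big_ord_recl big1 => [|t _]; last by rewrite bin_small.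
rewrite /= bin0 bin1 !mul1n addn0 subn0 subSS subn0 /binom_half /= uphalf_half.
by case: (odd r); rewrite ?add0n ?addn0.
Qed.

Lemma card_ord_lt n m : m <= n -> #|[set i : 'I_n | i < m]| = m.
Proof.
move=> le_mn; have -> : [set i : 'I_n | i < m] = [set widen_ord le_mn i | i : 'I_m].
  apply/setP => i; rewrite !inE; apply/idP/imsetP => [lt_im|[j _ ->]] //=.
  by exists (Ordinal lt_im) => //; apply: val_inj.
by rewrite card_imset ?card_ord // => i j /(congr1 val) /= /val_inj.
Qed.

Lemma card_ord_eq n m : m < n -> #|[set i : 'I_n | val i == m]| = 1.
Proof.
move=> lt_mn; rewrite (_ : [set i : 'I_n | val i == m] = [set Ordinal lt_mn]) ?cards1 //.
by apply/setP => i; rewrite !inE -val_eqE.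
Qed.

Section HVGroup.

Variables k l : nat.

Lemma hv_elt_involutive g : involutive (@hv_elt k l g).
Proof. by move=> [i j]; case: g => [[] []]; rewrite /hv_elt /reflH /reflV /= ?rev_ordK. Qed.

Definition hv_perm g : {perm cell k l} := perm (inv_inj (hv_elt_involutive g)).

Lemma hv_permE g : hv_perm g =1 @hv_elt k l g.
Proof. exact: permE. Qed.

Lemma hv_permM g1 g2 : (hv_perm g1 * hv_perm g2)%g = hv_perm (g1.1 (+) g2.1, g1.2 (+) g2.2).
Proof.
apply/permP => c; rewrite permM !hv_permE.
by case: g1 g2 c => [[] []] [[] []] [i j]; rewrite /hv_elt /reflH /reflV /= ?rev_ordK.
Qed.

Lemma hv_perm0 : hv_perm (false, false) = 1%g.
Proof. by apply/permP => c; rewrite hv_permE perm1. Qed.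

Lemma group_set_hv : group_set [set hv_perm g | g : bool * bool].
Proof.
apply/group_setP; split; first by rewrite -hv_perm0 imset_f.
by move=> _ _ /imsetP[g1 _ ->] /imsetP[g2 _ ->]; rewrite hv_permM imset_f.
Qed.

Definition hv_group := Group group_set_hv.

Lemma hv_perm_inj : 0 < k -> 0 < l -> injective hv_perm.
Proof.
move=> k_gt0 l_gt0 g1 g2 eq12.
pose corner : cell k l := (Ordinal (leq_addl (2 * k) 1), Ordinal (leq_addl (2 * l) 1)).
have := congr1 (fun p : {perm cell k l} => p corner) eq12; rewrite /= !hv_permE.
case: g1 g2 {eq12} => [[] []] [[] []] //=; rewrite /hv_elt /reflH /reflV /= => /eqP;
  rewrite xpair_eqE -!val_eqE /=; lia.
Qed.

Lemma card_hv_group : 0 < k -> 0 < l -> #|hv_group| = 4.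
Proof.
by move=> k_gt0 l_gt0; rewrite card_imset ?card_prod ?card_bool //; apply: hv_perm_inj.
Qed.

Lemma acts_hv_boards r : [acts hv_group, on boards k l r | 'P^*].
Proof. by apply/actsP => a _ B; rewrite !inE /= /setact card_imset //; apply: perm_inj. Qed.

Lemma hv_setactE g (B : {set cell k l}) : ('P^* B (hv_perm g))%act = @hv_elt k l g @: B.
Proof. by apply: eq_imset => c; rewrite /= apermE hv_permE. Qed.

Lemma hv_orbitsE r : hv_orbits k l r = orbit 'P^* hv_group @: boards k l r.
Proof.
apply: eq_imset => B; rewrite /orbit /hv_orbit /= -imset_comp.
by apply: eq_imset => g /=; rewrite hv_setactE.
Qed.

Lemma card_Fix_hv_perm r g :
  #|'Fix_(boards k l r | 'P^*)[hv_perm g]%g| = #|fixed_subsets (@hv_elt k l g) r|.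
Proof. by apply: eq_card => B; rewrite !inE sub1set !inE hv_setactE. Qed.

Lemma hv_Burnside r : 0 < k -> 0 < l ->
  4 * #|hv_orbits k l r| = \sum_(g : bool * bool) #|fixed_subsets (@hv_elt k l g) r|.
Proof.
move=> k_gt0 l_gt0; have := Frobenius_Cauchy (acts_hv_boards r).
rewrite -hv_orbitsE card_hv_group // mulnC => <-.
rewrite big_imset /=; last by move=> g1 g2 _ _; apply: hv_perm_inj.
by apply: eq_bigr => g _; rewrite card_Fix_hv_perm.
Qed.

End HVGroup.

Section FixedBoards.

Variables k l : nat.

Lemma card_fixed_boards_R0 r :
  #|fixed_subsets (@hv_elt k l (false, false)) r| = 'C((2*k+1)*(2*l+1), r).
Proof. by rewrite (card_fixed_subsets_id (cell k l)) card_prod !card_ord. Qed.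

Lemma card_fixed_boards_H r :
  #|fixed_subsets (@hv_elt k l (true, false)) r| =
    \sum_(t < r.+1) 'C(2*l+1, t) * binom_half (2*k*l + k) (r - t).
Proof.
rewrite (@card_fixed_subsets _ _ (hv_elt_involutive (true, false)) [set c : cell k l | c.1 < k]); first last.
- move=> [i j]; rewrite !inE /hv_elt /reflH /= xpair_eqE eqxx andbT -val_eqE /=.
  by have := ltn_ord i; lia.
- by move=> [i j]; rewrite !inE /hv_elt /reflH /=; have := ltn_ord i; lia.
have -> : [set c : cell k l | hv_elt (true, false) c == c] =
          setX [set i : 'I_(2*k+1) | val i == k] setT.
  apply/setP => -[i j]; rewrite !inE /hv_elt /reflH /= xpair_eqE eqxx andbT -val_eqE /=.
  by have := ltn_ord i; lia.
have -> : [set c : cell k l | c.1 < k] = setX [set i : 'I_(2*k+1) | i < k] setT.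
  by apply/setP => -[i j]; rewrite !inE andbT.
rewrite !cardsX cardsT card_ord card_ord_eq ?card_ord_lt; try lia.
by rewrite mul1n (_ : k * (2*l+1) = 2*k*l + k) //; lia.
Qed.

Lemma card_fixed_boards_V r :
  #|fixed_subsets (@hv_elt k l (false, true)) r| =
    \sum_(t < r.+1) 'C(2*k+1, t) * binom_half (2*k*l + l) (r - t).
Proof.
rewrite (@card_fixed_subsets _ _ (hv_elt_involutive (false, true)) [set c : cell k l | c.2 < l]); first last.
- move=> [i j]; rewrite !inE /hv_elt /reflV /= xpair_eqE eqxx /= -val_eqE /=.
  by have := ltn_ord j; lia.
- by move=> [i j]; rewrite !inE /hv_elt /reflV /=; have := ltn_ord j; lia.
have -> : [set c : cell k l | hv_elt (false, true) c == c] =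
          setX setT [set j : 'I_(2*l+1) | val j == l].
  apply/setP => -[i j]; rewrite !inE /hv_elt /reflV /= xpair_eqE eqxx /= -val_eqE /=.
  by have := ltn_ord j; lia.
have -> : [set c : cell k l | c.2 < l] = setX setT [set j : 'I_(2*l+1) | j < l].
  by apply/setP => -[i j]; rewrite !inE.
rewrite !cardsX cardsT card_ord card_ord_eq ?card_ord_lt; try lia.
by rewrite muln1 (_ : (2*k+1) * l = 2*k*l + l) //; lia.
Qed.

Lemma card_fixed_boards_R180 r :
  #|fixed_subsets (@hv_elt k l (true, true)) r| = 'C(2*k*l + k + l, r./2).
Proof.
pose R := [set c : cell k l | (c.1 < k) || ((val c.1 == k) && (c.2 < l))].
rewrite (@card_fixed_subsets _ _ (hv_elt_involutive (true, true)) R); first last.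
- move=> [i j]; rewrite !inE /hv_elt /reflH /reflV /= xpair_eqE -!val_eqE /=.
  by have := ltn_ord i; have := ltn_ord j; lia.
- move=> [i j]; rewrite !inE /hv_elt /reflH /reflV /=.
  by have := ltn_ord i; have := ltn_ord j; lia.
have -> : [set c : cell k l | hv_elt (true, true) c == c] =
          setX [set i : 'I_(2*k+1) | val i == k] [set j : 'I_(2*l+1) | val j == l].
  apply/setP => -[i j]; rewrite !inE /hv_elt /reflH /reflV /= xpair_eqE -!val_eqE /=.
  by have := ltn_ord i; have := ltn_ord j; lia.
have -> : R = setX [set i : 'I_(2*k+1) | i < k] setT
              :|: setX [set i : 'I_(2*k+1) | val i == k] [set j : 'I_(2*l+1) | j < l].
  by apply/setP => -[i j]; rewrite !inE andbT.
rewrite cardsU (_ : _ :&: _ = set0); last by apply/setP => -[i j]; rewrite !inE /=; lia.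
rewrite cards0 subn0 !cardsX cardsT card_ord !card_ord_eq ?card_ord_lt; try lia.
by rewrite !mul1n (_ : k * (2*l+1) + l = 2*k*l + k + l) ?sum_binom1_half //; lia.
Qed.

End FixedBoards.

Theorem proposition5p4 (k l r : nat) :
  1 <= k -> 1 <= l -> k != l -> 1 <= r <= (2*k+1)*(2*l+1) ->
  4 * #|hv_orbits k l r| =
    'C((2*k+1)*(2*l+1), r)
    + 'C(2*k*l + k + l, r./2)
    + \sum_(0 <= t < r.+1) 'C(2*k+1, t) * binom_half (2*k*l + l) (r - t)
    + \sum_(0 <= t < r.+1) 'C(2*l+1, t) * binom_half (2*k*l + k) (r - t).
Proof.
move=> k_gt0 l_gt0 _ _.
rewrite hv_Burnside //.
transitivity (\sum_(a : bool) \sum_(b : bool) #|fixed_subsets (@hv_elt k l (a, b)) r|).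
  by rewrite pair_bigA; apply: eq_bigr => -[a b].
rewrite !big_bool /= card_fixed_boards_R0 card_fixed_boards_H card_fixed_boards_V.
rewrite card_fixed_boards_R180 !big_mkord.
lia.
Qed.
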